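(* Let $\lambda>0$ and $\rho_1,\rho_2\in(0,1)$ with $\rho_1+\rho_2=1$. For an entropy generator $\psi$ consider the condition $$\sum_{j=1}^2\psi''\Big(\frac{u_j}{\rho_j}\Big)\frac1{\rho_j}(\rho_j-u_j)^2\ \ge\ \frac{\mu}{2\lambda}\sum_{j=1}^2\psi'\Big(\frac{u_j}{\rho_j}\Big)(u_j-\rho_j)\quad\text{for all }u\in[0,1]^2,\ u_1+u_2=1.$$ This condition holds with $$1\ge\frac{\mu}{2\lambda}=\begin{cases}1 & \text{for }\psi=\psi_2,\\ 2\min\{\rho_1,\rho_2\} & \text{for }\psi=\psi_3,\\ 2-2\sqrt{1-3\rho_2(1-\rho_2)}>0 & \text{for }\psi=\psi_4.\end{cases}$$
   Context: For $p>1$, $\psi_p(\sigma)=\sigma^p-1-p(\sigma-1)$ on $\sigma\ge0$. *)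

From HB Require Import structures.
From mathcomp Require Import all_boot all_order all_algebra.
From mathcomp Require Import all_classical all_reals all_analysis.
Set Implicit Arguments. Unset Strict Implicit. Unset Printing Implicit Defensive.
Import Order.TTheory GRing.Theory Num.Theory.
Import numFieldNormedType.Exports.
Local Open Scope ring_scope.

Definition psi (R : realType) (p : nat) (s : R) : R :=
  s ^+ p - 1 - p%:R * (s - 1).

Definition entropy_cond (R : realType) (f : R -> R) (rho1 rho2 c : R) : Prop :=
  forall u1 u2 : R, 0 <= u1 <= 1 -> 0 <= u2 <= 1 -> u1 + u2 = 1 ->
    c * ((derive1 f (u1 / rho1)) * (u1 - rho1) + (derive1 f (u2 / rho2)) * (u2 - rho2))
    <= (derive1n 2 f (u1 / rho1)) * rho1^-1 * (rho1 - u1) ^+ 2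
       + (derive1n 2 f (u2 / rho2)) * rho2^-1 * (rho2 - u2) ^+ 2.

From HB Require Import structures.
From mathcomp Require Import all_boot all_order all_algebra.
From mathcomp Require Import all_classical all_reals all_analysis.
From mathcomp Require Import ring lra.
Import Order.TTheory GRing.Theory Num.Theory.
Local Open Scope ring_scope.

(** With [t = u1 - rho1], the condition for [psi p] is a polynomial inequality
   in [t] on [-rho1 <= t <= rho2], and the difference of its two sides is [t^2]
   times a polynomial of degree [p - 2] over a positive denominator.  For
   [p = 2] that factor vanishes; for [p = 3] it is affine in [t] and, with
   [c = 2 min(rho1, rho2)], nonnegative at both ends of the range; for [p = 4]
   it is a quadratic whose discriminant vanishes at the stated [c], because
   [rho1^3 + rho2^3 = 1 - 3 rho1 rho2]. *)

Lemma quadratic_ge0 (R : realFieldType) (A B C t : R) :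
  0 < A -> B ^+ 2 <= 4 * A * C -> 0 <= A * t ^+ 2 + B * t + C.
Proof.
move=> A0 disc; rewrite -(pmulr_rge0 _ (_ : 0 < 4 * A)); last by lra.
have -> : 4 * A * (A * t ^+ 2 + B * t + C) = (2 * A * t + B) ^+ 2 + (4 * A * C - B ^+ 2)
  by ring.
by rewrite addr_ge0 ?sqr_ge0 ?subr_ge0.
Qed.

Lemma sqrtr_ge_half_lt1 (R : rcfType) (x : R) :
  1 / 4 <= x < 1 -> 1 / 2 <= Num.sqrt x < 1.
Proof.
move=> /andP[x_ge x_lt]; have s_ge0 := sqrtr_ge0 x.
have s2 : Num.sqrt x ^+ 2 = x by rewrite sqr_sqrtr //; lra.
apply/andP; split.
- by rewrite leNgt; apply/negP => s_small; nra.
- by rewrite ltNge; apply/negP => s_large; nra.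
Qed.

Section EntropyGenerator.
Variable R : realType.

Lemma is_derive_psi p (x : R) :
  is_derive x 1 (psi p) (p%:R * x ^+ p.-1 - p%:R).
Proof.
have -> : psi p = (@id R) ^+ p - cst 1 - p%:R *: ((@id R) - cst 1).
  by apply/funext => s; rewrite /psi /= !fctE.
apply: is_derive_eq.
by rewrite /GRing.scale /= !subr0 !mulr1.
Qed.

#[local] Existing Instance is_derive_psi.

Lemma derive1_psi p (x : R) : derive1 (psi p) x = p%:R * (x ^+ p.-1 - 1).
Proof. by rewrite derive1E derive_val mulrBr mulr1. Qed.

Lemma derive2_psi p (x : R) :
  derive1n 2 (psi p) x = p%:R * p.-1%:R * x ^+ p.-2.
Proof.
rewrite derive1nS derive1n1.
have -> : derive1 (psi p) = p%:R *: (@id R) ^+ p.-1 - cst p%:R.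
  by apply/funext => s; rewrite derive1_psi /= !fctE mulrBr mulr1.
by rewrite derive1E derive_val /GRing.scale /= !subr0 !mulr1 mulrA.
Qed.

Lemma entropy_cond_psi p (a b c : R) : 0 < a -> 0 < b -> a + b = 1 ->
  (forall t, - a <= t <= b ->
     c * t * ((1 + t / a) ^+ p.-1 - (1 - t / b) ^+ p.-1)
     <= p.-1%:R * ((1 + t / a) ^+ p.-2 / a + (1 - t / b) ^+ p.-2 / b) * t ^+ 2) ->
  entropy_cond (psi p) a b c.
Proof.
move=> a0 b0 ab deviation u1 u2 /andP[u10 u11] /andP[u20 u21] u12.
have t_range : - a <= u1 - a <= b by apply/andP; split; lra.
have eu2 : u2 = b - (u1 - a) by lra.
have -> : u1 / a = 1 + (u1 - a) / a by field; rewrite gt_eqF.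
have -> : u2 / b = 1 - (u1 - a) / b by rewrite eu2; field; rewrite gt_eqF.
rewrite !derive1_psi !derive2_psi.
have -> : u2 - b = - (u1 - a) by lra.
have -> : b - u2 = u1 - a by lra.
move: (ler_wpM2l (ler0n R p) (deviation _ t_range)); congr (_ <= _); ring.
Qed.

Lemma entropy_cond_psi2 (a b : R) : 0 < a -> 0 < b -> a + b = 1 ->
  entropy_cond (psi 2) a b 1.
Proof.
move=> a0 b0 ab; apply: entropy_cond_psi => // t _ /=.
rewrite !expr1 !expr0; lra.
Qed.

Lemma entropy_cond_psi3 (a b : R) : 0 < a -> 0 < b -> a + b = 1 ->
  entropy_cond (psi 3) a b (2 * Num.min a b).
Proof.
move=> a0 b0 ab; apply: entropy_cond_psi => // t /andP[ta tb] /=.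
set c := 2 * _.
have Q_ge0 : 0 <= 2 * a * b * (1 - c) + (2 - c) * (b - a) * t.
  have eb : b = 1 - a by lra.
  rewrite /c; case: (lerP a b) => hab.
  - have -> : 2 * a * b * (1 - 2 * a) + (2 - 2 * a) * (b - a) * t
              = 2 * (b - a) * b * (a + t) by rewrite eb; ring.
    by rewrite !mulr_ge0 //; lra.
  - have -> : 2 * a * b * (1 - 2 * b) + (2 - 2 * b) * (b - a) * t
              = 2 * (a - b) * a * (b - t) by rewrite eb; ring.
    by rewrite !mulr_ge0 //; lra.
rewrite -subr_ge0 expr1; set D := (X in 0 <= X).
have -> : D = t ^+ 2 * (2 * a * b * (1 - c) + (2 - c) * (b - a) * t) / (a * b) ^+ 2.
  rewrite /D; have eb : b = 1 - a by lra.
  by subst b; field; rewrite !gt_eqF.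
by apply: divr_ge0; [apply: mulr_ge0 | apply: sqr_ge0]; rewrite ?sqr_ge0.
Qed.

Lemma entropy_cond_psi4 (a b : R) : 0 < a -> 0 < b -> a + b = 1 ->
  entropy_cond (psi 4) a b (2 - 2 * Num.sqrt (1 - 3 * b * (1 - b))).
Proof.
move=> a0 b0 ab; apply: entropy_cond_psi => // t _ /=.
have eb : b = 1 - a by lra.
set s := Num.sqrt _; set c := 2 - 2 * s.
have s_ge0 : 0 <= s by apply: sqrtr_ge0.
have s2 : s ^+ 2 = 1 - 3 * a * b.
  by rewrite sqr_sqrtr; rewrite eb; [ring | nra].
set A := (3 - c) * (a ^+ 3 + b ^+ 3).
set B := 3 * (2 - c) * a * b * (b - a).
set C := 3 * a ^+ 2 * b ^+ 2 * (1 - c).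
have A_gt0 : 0 < A by rewrite /A /c eb; apply: mulr_gt0; nra.
(* [c] is chosen so that the quadratic factor is a perfect square. *)
have disc0 : 4 * A * C - B ^+ 2 = 0.
  have -> : 4 * A * C - B ^+ 2 = 12 * a ^+ 2 * b ^+ 2 * (s ^+ 2 - (1 - 3 * a * b)).
    by rewrite /A /B /C /c eb; ring.
  by rewrite s2 subrr mulr0.
rewrite -subr_ge0; set D := (X in 0 <= X).
have -> : D = t ^+ 2 * (A * t ^+ 2 + B * t + C) / (a ^+ 3 * b ^+ 3).
  by rewrite /D /A /B /C; subst b; field; rewrite !gt_eqF.
apply: divr_ge0; last by rewrite mulr_ge0 ?exprn_ge0 ?ltW.
by rewrite mulr_ge0 ?sqr_ge0 // quadratic_ge0 // -subr_ge0 disc0.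
Qed.

End EntropyGenerator.

Theorem lemma1 (R : realType) (lambda rho1 rho2 : R) :
  0 < lambda -> 0 < rho1 < 1 -> 0 < rho2 < 1 -> rho1 + rho2 = 1 ->
  (forall mu : R, mu / (2 * lambda) = 1 ->
     entropy_cond (psi 2) rho1 rho2 (mu / (2 * lambda)) /\ mu / (2 * lambda) <= 1)
  /\ (forall mu : R, mu / (2 * lambda) = 2 * Num.min rho1 rho2 ->
     entropy_cond (psi 3) rho1 rho2 (mu / (2 * lambda)) /\ mu / (2 * lambda) <= 1)
  /\ (forall mu : R,
        mu / (2 * lambda) = 2 - 2 * Num.sqrt (1 - 3 * rho2 * (1 - rho2)) ->
     entropy_cond (psi 4) rho1 rho2 (mu / (2 * lambda)) /\ mu / (2 * lambda) <= 1
     /\ 0 < mu / (2 * lambda)).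
Proof.
move=> _ /andP[r1_gt0 r1_lt1] /andP[r2_gt0 r2_lt1] r12.
split; [|split] => mu ->.
- by split; [exact: entropy_cond_psi2 | exact: lexx].
- split; first exact: entropy_cond_psi3.
  by case: (lerP rho1 rho2) => r_cmp; lra.
- split; first exact: entropy_cond_psi4.
  have : 1 / 2 <= Num.sqrt (1 - 3 * rho2 * (1 - rho2)) < 1.
    apply: sqrtr_ge_half_lt1; apply/andP; split.
    + by have := sqr_ge0 (rho2 - 1 / 2); rewrite expr2; lra.
    + have : 0 < rho2 * (1 - rho2) by rewrite mulr_gt0 // subr_gt0.
      lra.
  by move=> /andP[? ?]; split; lra.
Qed.
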